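(* Let $\tilde\omega=(\ell_1/t_1,\dots,\ell_\nu/t_\nu)\in\mathbb Q^\nu\setminus\{0\}$ with $\ell_j\in\mathbb Z$, $t_j\in\mathbb Z_{\ge1}$. Suppose $0<a_0<1$, $\nu<b_0<\infty$, $\bar R_0>0$ with $\bar R_0^{\,b_0}>\prod_jt_j$, and $|n\cdot\tilde\omega|\ge a_0|n|^{-b_0}$ for all $n\in\mathbb Z^\nu$ with $0<|n|\le\bar R_0$. Then $|\mathfrak n\tilde\omega|\ge a_0|\mathfrak n|^{-b_0}$ for every $\mathfrak n\in\mathfrak Z(\tilde\omega)\setminus\{0\}$.
   Context: $|\cdot|$ is a fixed norm on $\mathbb R^\nu$ restricted to $\mathbb Z^\nu$, and $n\cdot\tilde\omega$ is the usual dot product. $\mathfrak N(\tilde\omega)=\{n\in\mathbb Z^\nu:n\cdot\tilde\omega=0\}$ and $\mathfrak Z(\tilde\omega)=\mathbb Z^\nu/\mathfrak N(\tilde\omega)$. For a coset $\mathfrak n$, $|\mathfrak n|=\min\{|n|:n\in\mathfrak n\}$ and $\mathfrak n\tilde\omega:=n\cdot\tilde\omega$ for any $n\in\mathfrak n$ (independent of the choice). *)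

From Stdlib Require Import Reals List.
Open Scope R_scope.

(* Vectors of R^nu are represented as functions nat -> R; only the
   coordinates 0..nu-1 are meaningful.  Integer vectors (Z^nu) are
   functions nat -> Z. *)

Fixpoint rsum (nu : nat) (f : nat -> R) : R :=
  match nu with
  | O => 0
  | S k => rsum k f + f k
  end.

Fixpoint rprod (nu : nat) (f : nat -> R) : R :=
  match nu with
  | O => 1
  | S k => rprod k f * f k
  end.

Definition zvec (n : nat -> Z) : nat -> R := fun i => IZR (n i).

Definition dot (nu : nat) (x y : nat -> R) : R := rsum nu (fun i => x i * y i).

Definition is_norm (nu : nat) (N : (nat -> R) -> R) : Prop :=
  (forall x y, (forall i, (i < nu)%nat -> x i = y i) -> N x = N y) /\
  (forall x, 0 <= N x) /\
  (forall x, N x = 0 -> forall i, (i < nu)%nat -> x i = 0) /\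
  (forall c x, N (fun i => c * x i) = Rabs c * N x) /\
  (forall x y, N (fun i => x i + y i) <= N x + N y).

(* The coset of n in Z^nu / N(omega): all m with (m - n).omega = 0,
   i.e. m.omega = n.omega.  [r] is the norm of the coset:
   r = min { N m : m in the coset of n }. *)
Definition is_coset_norm (nu : nat) (N : (nat -> R) -> R) (omega : nat -> R)
    (n : nat -> Z) (r : R) : Prop :=
  (exists m : nat -> Z,
      dot nu (zvec m) omega = dot nu (zvec n) omega /\ N (zvec m) = r) /\
  (forall m : nat -> Z,
      dot nu (zvec m) omega = dot nu (zvec n) omega -> r <= N (zvec m)).

From Stdlib Require Import Reals Lra Lia.
Open Scope R_scope.

(* Clearing denominators, [q . omega] is an integer multiple of [1 / prod_j t_j]
   for every integer vector [q]; so a nonzero value has modulus at least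
   [1 / prod_j t_j > R0^(-b0)], which dominates [a0 |n|^(-b0)] as soon as
   [|n| > R0].  For [|n| <= R0] the hypothesis applies to a minimal
   representative of the coset, which has the same value [n . omega]. *)

Lemma dot_rational_common_denominator (l t n : nat -> Z) (k : nat) :
  (forall j, (j < k)%nat -> (1 <= t j)%Z) ->
  exists p z : Z, (1 <= p)%Z /\ rprod k (fun j => IZR (t j)) = IZR p /\
    dot k (zvec n) (fun j => IZR (l j) / IZR (t j)) * IZR p = IZR z.
Proof.
  unfold dot; induction k as [|k IH]; intros Ht.
  - exists 1%Z, 0%Z; simpl; repeat split; [lia | ring].
  - destruct IH as [p [z [Hp [HP Hz]]]]; [intros j Hj; apply Ht; lia|].
    assert (Htk : (1 <= t k)%Z) by (apply Ht; lia).
    assert (Htk0 : IZR (t k) <> 0) by (apply not_0_IZR; lia).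
    exists (p * t k)%Z, (z * t k + n k * l k * p)%Z; simpl.
    rewrite HP, !mult_IZR; repeat split; [lia|].
    rewrite plus_IZR, !mult_IZR, <- Hz; unfold zvec; field; exact Htk0.
Qed.

Lemma dot_rational_abs_ge (l t n : nat -> Z) (k : nat) :
  (forall j, (j < k)%nat -> (1 <= t j)%Z) ->
  dot k (zvec n) (fun j => IZR (l j) / IZR (t j)) <> 0 ->
  0 < rprod k (fun j => IZR (t j)) /\
  / rprod k (fun j => IZR (t j)) <= Rabs (dot k (zvec n) (fun j => IZR (l j) / IZR (t j))).
Proof.
  intros Ht Hd.
  destruct (dot_rational_common_denominator l t n k Ht) as [p [z [Hp [-> Hz]]]].
  set (D := dot k _ _) in *.
  assert (HpR : 1 <= IZR p) by (apply IZR_le; exact Hp).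
  assert (Hz0 : z <> 0%Z).
  { intros ->; apply Hd, (Rmult_eq_reg_r (IZR p)); [rewrite Hz; ring | lra]. }
  assert (Hzabs : 1 <= Rabs (IZR z)) by (rewrite <- abs_IZR; apply IZR_le; lia).
  rewrite <- Hz, Rabs_mult, (Rabs_right (IZR p)) in Hzabs by lra.
  split; [lra|].
  apply (Rmult_le_reg_r (IZR p)); [lra|].
  rewrite Rinv_l by lra; exact Hzabs.
Qed.

Lemma dot_eq0_l (k : nat) (x w : nat -> R) :
  (forall i, (i < k)%nat -> x i = 0) -> dot k x w = 0.
Proof.
  unfold dot; induction k as [|k IH]; intros Hx; simpl; [reflexivity|].
  rewrite IH, (Hx k) by first [lia | intros; apply Hx; lia]; ring.
Qed.

Lemma coset_norm_gt0 (nu : nat) (N : (nat -> R) -> R) (omega : nat -> R)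
    (n : nat -> Z) (r : R) :
  is_norm nu N -> dot nu (zvec n) omega <> 0 ->
  is_coset_norm nu N omega n r -> 0 < r.
Proof.
  intros [_ [Hpos [Hdef _]]] Hd [[m [Hm <-]] _].
  destruct (Hpos (zvec m)) as [Hgt | Heq]; [exact Hgt|].
  exfalso; apply Hd; rewrite <- Hm; apply dot_eq0_l, Hdef; auto.
Qed.

Lemma Rpower_Ropp_lt_contravar (x y b : R) :
  0 < b -> 0 < x < y -> Rpower y (- b) < Rpower x (- b).
Proof.
  intros Hb Hxy.
  assert (Hx : 0 < Rpower x b) by (unfold Rpower; apply exp_pos).
  assert (Hxy_b : Rpower x b < Rpower y b) by (apply Rlt_Rpower_l; lra).
  rewrite !Rpower_Ropp; apply Rinv_lt_contravar; [apply Rmult_lt_0_compat |]; lra.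
Qed.

Theorem mainTheorem8
  (nu : nat) (N : (nat -> R) -> R) (HN : is_norm nu N)
  (l t : nat -> Z)
  (Ht : forall j, (j < nu)%nat -> (1 <= t j)%Z)
  (Hnz : exists j, (j < nu)%nat /\ l j <> 0%Z)
  (a0 b0 R0 : R)
  (Ha0 : 0 < a0 < 1) (Hb0 : INR nu < b0) (HR0 : 0 < R0)
  (HR0b : Rpower R0 b0 > rprod nu (fun j => IZR (t j)))
  (Hdio : forall n : nat -> Z, 0 < N (zvec n) <= R0 ->
     Rabs (dot nu (zvec n) (fun j => IZR (l j) / IZR (t j)))
       >= a0 * Rpower (N (zvec n)) (- b0)) :
  forall (n : nat -> Z) (r : R),
    dot nu (zvec n) (fun j => IZR (l j) / IZR (t j)) <> 0 ->
    is_coset_norm nu N (fun j => IZR (l j) / IZR (t j)) n r ->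
    Rabs (dot nu (zvec n) (fun j => IZR (l j) / IZR (t j)))
      >= a0 * Rpower r (- b0).
Proof.
  intros n r Hd Hr.
  pose proof (coset_norm_gt0 nu N _ n r HN Hd Hr) as Hr0.
  destruct Hr as [[m [Hm HNm]] _].
  destruct (Rle_or_lt r R0) as [Hle | Hlt].
  - rewrite <- Hm, <- HNm; apply Hdio; lra.
  - assert (Hb : 0 < b0) by (pose proof (pos_INR nu); lra).
    destruct (dot_rational_abs_ge l t n nu Ht Hd) as [HP HD].
    pose proof (Rpower_Ropp_lt_contravar R0 r b0 Hb (conj HR0 Hlt)) as Hdecr.
    assert (HR0P : Rpower R0 (- b0) < / rprod nu (fun j => IZR (t j))).
    { rewrite Rpower_Ropp; apply Rinv_lt_contravar; [apply Rmult_lt_0_compat|]; lra. }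
    assert (Hpos : 0 < Rpower r (- b0)) by (unfold Rpower; apply exp_pos).
    apply Rle_ge; nra.
Qed.
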